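(* Let $K$ be a field (of arbitrary characteristic), $0\ne q\in K$, $\phi$ the $K$-algebra endomorphism of $K[x]$ with $\phi(x)=qx$, and $\delta=\mathrm{id}-\phi$. Then: 1) if $q=1$, then $\operatorname{Im}\delta=0$; 2) if $q$ is not a root of unity in $K$, then $\operatorname{Im}\delta=xK[x]$; 3) if $q$ is a root of unity in $K$, then $\mathfrak{r}(\operatorname{Im}\delta)=\{0\}$. In all these cases $\operatorname{Im}\delta$ is a Mathieu subspace of $K[x]$.
   Context: $\mathrm{id}$ is the identity map of $K[x]$. For a subset $V$ of $K[x]$, $\mathfrak{r}(V)=\{a\in K[x]\mid a^m\in V\text{ for all } m\gg0\}$. A $K$-subspace $V$ of a commutative $K$-algebra $\mathcal{A}$ is a Mathieu subspace if for all $a,b\in\mathcal{A}$ with $a^m\in V$ for all $m\ge 1$, one has $a^mb\in V$ for all $m\gg 0$. *)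

From HB Require Import structures.
From mathcomp Require Import all_boot all_order all_algebra.
Set Implicit Arguments. Unset Strict Implicit. Unset Printing Implicit Defensive.
Import Order.TTheory GRing.Theory Num.Theory.
Local Open Scope ring_scope.

Definition qphi (K : fieldType) (q : K) (p : {poly K}) : {poly K} :=
  p \Po (q *: 'X).

Definition qdelta (K : fieldType) (q : K) (p : {poly K}) : {poly K} :=
  p - qphi q p.

Definition Im_delta (K : fieldType) (q : K) (f : {poly K}) : Prop :=
  exists p, f = qdelta q p.

Definition radical (K : fieldType) (V : {poly K} -> Prop) (a : {poly K}) : Prop :=
  exists N : nat, forall m : nat, (N <= m)%N -> V (a ^+ m).

Definition is_subspace (K : fieldType) (A : comAlgType K) (V : A -> Prop) : Prop :=
  [/\ V 0, (forall u v, V u -> V v -> V (u + v)) &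
      (forall (c : K) u, V u -> V (c *: u))].

Definition mathieu_subspace (K : fieldType) (A : comAlgType K) (V : A -> Prop) : Prop :=
  is_subspace V /\
  forall a b : A, (forall m : nat, (1 <= m)%N -> V (a ^+ m)) ->
    exists N : nat, forall m : nat, (N <= m)%N -> V (a ^+ m * b).

From HB Require Import structures.
From mathcomp Require Import all_boot all_order all_algebra.

Set Implicit Arguments.
Unset Strict Implicit.
Unset Printing Implicit Defensive.
Import Order.TTheory GRing.Theory Num.Theory.
Local Open Scope ring_scope.

(* The map delta is diagonal on monomials, delta (x^i) = (1 - q^i) x^i, so its
   image is spanned by the x^i with q^i <> 1.  If q^n = 1, the leading monomial
   of a^(nk) has degree divisible by n, so no nonzero a has all its powers in the
   image and the Mathieu condition is vacuous.  Otherwise the image is x K[x],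
   which is an ideal. *)

Section QDelta.

Variables (K : fieldType) (q : K).

Lemma coef_qphi (p : {poly K}) i : (qphi q p)`_i = q ^+ i * p`_i.
Proof.
rewrite /qphi comp_polyE coef_sum.
under eq_bigr => j _ do rewrite exprZn coefZ coefZ coefXn.
case: (ltnP i (size p)) => [lt_i_p | le_p_i].
  rewrite (bigD1 (Ordinal lt_i_p)) //= eqxx mulr1 big1 ?addr0; first by rewrite mulrC.
  by move=> j /negbTE; rewrite -val_eqE /= eq_sym => ->; rewrite !mulr0.
rewrite nth_default // mulr0 big1 // => j _.
have lt_j_i : (j < i)%N by apply: leq_trans (ltn_ord j) le_p_i.
by rewrite eq_sym ltn_eqF // !mulr0.
Qed.

Lemma coef_qdelta (p : {poly K}) i : (qdelta q p)`_i = (1 - q ^+ i) * p`_i.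
Proof. by rewrite /qdelta coefB coef_qphi mulrBl mul1r. Qed.

Lemma Im_deltaP (f : {poly K}) :
  Im_delta q f <-> (forall i, q ^+ i = 1 -> f`_i = 0).
Proof.
split=> [[p ->] i qi1 | f_q1]; first by rewrite coef_qdelta qi1 subrr mul0r.
exists (\poly_(i < size f) (f`_i / (1 - q ^+ i))).
apply/polyP => i; rewrite coef_qdelta coef_poly.
case: (ltnP i (size f)) => [_ | le_f_i]; last by rewrite mulr0 nth_default.
have [qi1 | qi_neq1] := eqVneq (q ^+ i) 1; first by rewrite f_q1 // qi1 subrr mul0r.
by rewrite mulrC divfK // subr_eq0 eq_sym.
Qed.

Lemma Im_delta0 : Im_delta q 0.
Proof. by apply/Im_deltaP => i _; rewrite coef0. Qed.

Lemma Im_delta_subspace : is_subspace (Im_delta q).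
Proof.
split.
- exact: Im_delta0.
- move=> u v /Im_deltaP u_q1 /Im_deltaP v_q1; apply/Im_deltaP => i qi1.
  by rewrite coefD u_q1 // v_q1 // addr0.
- move=> c u /Im_deltaP u_q1; apply/Im_deltaP => i qi1.
  by rewrite coefZ u_q1 // mulr0.
Qed.

Lemma Im_delta_coef0 (f : {poly K}) : Im_delta q f -> f`_0 = 0.
Proof. by move/Im_deltaP => f_q1; apply: f_q1. Qed.

Lemma Im_delta_q1 (f : {poly K}) : q = 1 -> Im_delta q f <-> f = 0.
Proof.
move=> q1; split=> [/Im_deltaP f_q1 | ->]; last exact: Im_delta0.
by apply/polyP => i; rewrite coef0 f_q1 // q1 expr1n.
Qed.

Section NotRootOfUnity.

Hypothesis q_not_root1 : forall n, (0 < n)%N -> q ^+ n != 1.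

Lemma Im_delta_not_root1 (f : {poly K}) : Im_delta q f <-> f`_0 = 0.
Proof.
split=> [|f0]; first exact: Im_delta_coef0.
apply/Im_deltaP => -[// | i] qi1.
by move: (q_not_root1 (ltn0Sn i)); rewrite qi1 eqxx.
Qed.

Lemma Im_delta_mulr (f g : {poly K}) : Im_delta q f -> Im_delta q (f * g).
Proof.
by move/Im_delta_not_root1 => f0; apply/Im_delta_not_root1; rewrite coef0M f0 mul0r.
Qed.

Lemma Im_delta_not_root1_mulX (f : {poly K}) :
  Im_delta q f <-> exists g : {poly K}, f = 'X * g.
Proof.
split=> [/Im_delta_not_root1 | [g ->]].
  by rewrite -horner_coef0 => /eqP /factor_theorem [g ->]; exists g; rewrite subr0 mulrC.
by apply/Im_delta_not_root1; rewrite -horner_coef0 hornerM hornerX mul0r.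
Qed.

End NotRootOfUnity.

Lemma exp_notin_Im_delta n m (a : {poly K}) :
  q ^+ n = 1 -> (n %| m)%N -> a != 0 -> ~ Im_delta q (a ^+ m).
Proof.
move=> qn1 /dvdnP [k ->] a_neq0 /Im_deltaP am_q1.
have: q ^+ (size (a ^+ (k * n))).-1 = 1.
  by rewrite size_exp (mulnC k) mulnCA exprM qn1 expr1n.
move/am_q1; rewrite -/(lead_coef _) lead_coef_exp => /eqP.
by rewrite expf_eq0 lead_coef_eq0 (negbTE a_neq0) andbF.
Qed.

Lemma radical_Im_delta_root1 n :
  (0 < n)%N -> q ^+ n = 1 -> forall a : {poly K}, radical (Im_delta q) a <-> a = 0.
Proof.
move=> n_gt0 qn1 a; split=> [[N aN_Im] | ->].
  have [// | a_neq0] := eqVneq a 0; exfalso.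
  exact: exp_notin_Im_delta qn1 (dvdn_mull N (dvdnn n)) a_neq0 (aN_Im _ (leq_pmulr N n_gt0)).
exists 1%N => m m_gt0; rewrite expr0n eqn0Ngt m_gt0.
exact: Im_delta0.
Qed.

Lemma Im_delta_mathieu : mathieu_subspace (Im_delta q).
Proof.
split; first exact: Im_delta_subspace.
move=> a b a_Im; exists 1%N => m m_gt0.
have [-> | a_neq0] := eqVneq a 0.
  by rewrite expr0n eqn0Ngt m_gt0 mul0r; exact: Im_delta0.
apply: Im_delta_mulr; last exact: a_Im.
move=> n n_gt0; apply/eqP => qn1.
exact: exp_notin_Im_delta qn1 (dvdnn n) a_neq0 (a_Im n n_gt0).
Qed.

End QDelta.

Theorem lemma3p3 (K : fieldType) (q : K) (hq : q != 0) :
  [/\ (q = 1 -> forall f : {poly K}, Im_delta q f <-> f = 0),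
      ((forall n : nat, (0 < n)%N -> q ^+ n != 1) ->
         forall f : {poly K}, Im_delta q f <-> exists g : {poly K}, f = 'X * g),
      ((exists2 n : nat, (0 < n)%N & q ^+ n = 1) ->
         forall a : {poly K}, radical (Im_delta q) a <-> a = 0)
    & mathieu_subspace (Im_delta q)].
Proof.
split.
- by move=> q1 f; apply: Im_delta_q1.
- exact: Im_delta_not_root1_mulX.
- by move=> [n n_gt0 qn1]; apply: radical_Im_delta_root1 n_gt0 qn1.
- exact: Im_delta_mathieu.
Qed.
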